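(* Let $k\geq1$ and $d_1,\dots,d_k\geq3$ be integers, and let $T=W_{d_1}\otimes\cdots\otimes W_{d_k}$. Let $A\subseteq(\mathbb{P}^1)^k$ be a zero-dimensional scheme such that $[T]\in\langle\nu_{d_1,\dots,d_k}(A)\rangle$. Then for all integers $a_1,\dots,a_k$ with $0\leq a_i\leq d_i-1$, we have $|\mathcal{I}_A(a_1,\dots,a_k)|\subseteq|\mathcal{I}_{Z_k}(a_1,\dots,a_k)|$; that is, every divisor of multidegree $(a_1,\dots,a_k)$ on $(\mathbb{P}^1)^k$ containing $A$ also contains $Z_k$.
   Context: Identify $S^d\mathbb{C}^2$ with binary forms in a basis $\{x,y\}$ (coordinates $x_i,y_i$ on the $i$-th factor), $W_d=x^{d-1}y$. $\nu_{d_1,\dots,d_k}:(\mathbb{P}^1)^k\to\mathbb{P}(S^{d_1}\mathbb{C}^2\otimes\cdots\otimes S^{d_k}\mathbb{C}^2)$, $([v_1],\dots,[v_k])\mapsto[v_1^{d_1}\otimes\cdots\otimes v_k^{d_k}]$ is the Segre–Veronese embedding; $\langle Y\rangle$ denotes linear span of a subscheme. $|\mathcal{I}_A(a_1,\dots,a_k)|$ is the projectivization of the space of multihomogeneous forms of multidegree $(a_1,\dots,a_k)$ vanishing on $A$ (divisors in $|\mathcal{O}(a_1,\dots,a_k)|$ containing $A$). Let $o_1=[x]\in\mathbb{P}^1$, $Z_1\subseteq\mathbb{P}^1$ the degree-2 scheme supported at $o_1$ with ideal $(\partial_y^2)$, and $Z_k=Z_1\times\cdots\times Z_1$. *)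

From HB Require Import structures.
From mathcomp Require Import all_boot all_algebra.
From mathcomp Require Import reals complex.
From mathcomp Require Import mpoly.

Set Implicit Arguments.
Unset Strict Implicit.
Unset Printing Implicit Defensive.

Import GRing.Theory.
Local Open Scope ring_scope.

(* Cox ring of (P^1)^k : C[x_1,y_1,...,x_k,y_k]; variable x_i is the
   (lshift k i)-th variable and y_i is the (rshift k i)-th one. *)
Definition xv (k : nat) (i : 'I_k) : 'I_(k + k) := lshift k i.
Definition yv (k : nat) (i : 'I_k) : 'I_(k + k) := rshift k i.

Notation CoxRing R k := {mpoly (R[i])[k + k]}.

Definition mdeg_i (k : nat) (m : 'X_{1..k + k}) (i : 'I_k) : nat :=
  (m (xv i) + m (yv i))%N.

(* p is a multihomogeneous form of multidegree a (0 counts as such) *)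
Definition is_multihomog (R : realType) (k : nat) (a : 'I_k -> nat)
    (p : CoxRing R k) : Prop :=
  forall m, m \in msupp p -> forall i, mdeg_i m i = a i.

Definition mcomponent (R : realType) (k : nat) (a : 'I_k -> nat)
    (p : CoxRing R k) : CoxRing R k :=
  \sum_(m <- msupp p | [forall i, mdeg_i m i == a i]) p@_m *: 'X_[m].

Definition is_ideal (R : realType) (k : nat) (I : CoxRing R k -> Prop) : Prop :=
  [/\ I 0, (forall p q, I p -> I q -> I (p + q)) &
      (forall p q, I p -> I (q * p))].

Definition multihomog_ideal (R : realType) (k : nat)
    (I : CoxRing R k -> Prop) : Prop :=
  is_ideal I /\ (forall a p, I p -> I (mcomponent a p)).

(* saturation w.r.t. the irrelevant ideal B = prod_i (x_i, y_i):
   B^m is generated by the monomials of multidegree (m,...,m) *)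
Definition B_saturated (R : realType) (k : nat) (I : CoxRing R k -> Prop) : Prop :=
  forall p : CoxRing R k,
    (exists m : nat, forall M : 'X_{1..k + k},
        (forall i, mdeg_i M i = m) -> I (p * 'X_[M])) -> I p.

(* bounded multigraded Hilbert function: dim (S/I)_a <= N for every a *)
Definition bounded_hilbert (R : realType) (k : nat) (I : CoxRing R k -> Prop) : Prop :=
  exists N : nat, forall (a : 'I_k -> nat) (F : 'I_N.+1 -> CoxRing R k),
    (forall t, is_multihomog a (F t)) ->
    exists c : 'I_N.+1 -> R[i], (exists t, c t != 0) /\ I (\sum_t c t *: F t).

(* A zero-dimensional closed subscheme A of (P^1)^k, encoded by its
   (B-saturated, multihomogeneous) ideal I_A. *)
Definition zerodim_subscheme (R : realType) (k : nat) (I : CoxRing R k -> Prop) : Prop :=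
  [/\ multihomog_ideal I, B_saturated I & bounded_hilbert I].

(* Coordinates on S^{d_1}C^2 (x) ... (x) S^{d_k}C^2 with respect to the basis
   (x)_i x^{d_i - j_i} y^{j_i}, j_i in {0..d_i}. *)
Definition TIdx (k : nat) (d : 'I_k -> nat) := {dffun forall i : 'I_k, 'I_(d i).+1}.

(* pullback nu^* l of the linear form l (given by its values on the basis)
   under the Segre-Veronese map nu_{d_1..d_k}: a form of multidegree d *)
Definition sv_pullback (R : realType) (k : nat) (d : 'I_k -> nat)
    (l : TIdx d -> R[i]) : CoxRing R k :=
  \sum_(j : TIdx d) l j *:
     \prod_(i < k) (('C(d i, j i))%:R *: ('X_(xv i) ^+ (d i - j i) * 'X_(yv i) ^+ (j i))).

(* T = W_{d_1} (x) ... (x) W_{d_k}, W_d = x^{d-1} y, in these coordinates *)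
Definition W_tensor (R : realType) (k : nat) (d : 'I_k -> nat) (j : TIdx d) : R[i] :=
  if [forall i, (j i : nat) == 1%N] then 1 else 0.

(* [T] lies in the linear span <nu(A)>: every hyperplane {l = 0} containing
   the subscheme nu(A) (i.e. nu^* l in I_A) contains [T]. *)
Definition in_span (R : realType) (k : nat) (I : CoxRing R k -> Prop)
    (d : 'I_k -> nat) (T : TIdx d -> R[i]) : Prop :=
  forall l : TIdx d -> R[i], I (sv_pullback l) -> \sum_(j : TIdx d) l j * T j = 0.

(* ideal of Z_k = Z_1 x ... x Z_1, Z_1 = V(y^2) at o_1 = [x]: (y_1^2,...,y_k^2) *)
Definition ideal_Zk (R : realType) (k : nat) (p : CoxRing R k) : Prop :=
  exists G : 'I_k -> CoxRing R k, p = \sum_(i < k) G i * 'X_(yv i) ^+ 2.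

From mathcomp Require Import all_boot all_algebra.
From mathcomp Require Import reals complex.
From mathcomp Require Import mpoly.
From mathcomp Require Import zify.
Import GRing.Theory Num.Theory.
Set Implicit Arguments.
Unset Strict Implicit.
Unset Printing Implicit Defensive.
Local Open Scope ring_scope.

(* Let w = prod_i x_i^(d_i - 1) y_i.  Pulling back along nu identifies linear
   forms on the tensor space with forms of multidegree d, and the linear form
   paired with T reads off the w-coefficient (up to a binomial weight).  So if
   [T] lies in <nu(A)>, every form of multidegree d in I_A has w-coefficient 0.
   If p in I_A of multidegree a <= d - 1 had a monomial m with all y-exponents
   at most 1, then m would divide w, and p * (w / m) would be a form of
   multidegree d in I_A whose w-coefficient is the nonzero m-coefficient of p.
   Hence every monomial of p is divisible by some y_i^2. *)

Section CoxMonomials.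
Variable k : nat.

Definition mnm_xy (ex ey : 'I_k -> nat) : 'X_{1..k + k} :=
  [multinom match split v with inl i => ex i | inr i => ey i end | v < k + k].

Lemma mnm_xy_x ex ey i : mnm_xy ex ey (xv i) = ex i.
Proof. by rewrite mnmE /xv (unsplitK (inl i : 'I_k + 'I_k)). Qed.

Lemma mnm_xy_y ex ey i : mnm_xy ex ey (yv i) = ey i.
Proof. by rewrite mnmE /yv (unsplitK (inr i : 'I_k + 'I_k)). Qed.

Lemma mnm_xyP (m1 m2 : 'X_{1..k + k}) :
  (forall i, m1 (xv i) = m2 (xv i)) -> (forall i, m1 (yv i) = m2 (yv i)) ->
  m1 = m2.
Proof. by move=> ex ey; apply/mnmP => v; rewrite -[v]splitK; case: split. Qed.

Lemma mnm_xy_le (ex ey : 'I_k -> nat) (m : 'X_{1..k + k}) :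
  (forall i, m (xv i) <= ex i)%N -> (forall i, m (yv i) <= ey i)%N ->
  (m <= mnm_xy ex ey)%MM.
Proof.
move=> lex ley; apply/mnm_lepP => v; rewrite -[v]splitK.
by case: split => i; rewrite -/(xv i) -/(yv i) (mnm_xy_x, mnm_xy_y);
  [exact: lex | exact: ley].
Qed.

Lemma mdeg_iD (m1 m2 : 'X_{1..k + k}) i :
  mdeg_i (m1 + m2)%MM i = (mdeg_i m1 i + mdeg_i m2 i)%N.
Proof. by rewrite /mdeg_i !mnmDE addnACA. Qed.

Lemma mpolyX_xy (R : comNzRingType) ex ey :
  'X_[mnm_xy ex ey] = \prod_(i < k) ('X_(xv i) ^+ ex i * 'X_(yv i) ^+ ey i)
    :> {mpoly R[k + k]}.
Proof.
rewrite mpolyXE_id big_split_ord big_split /=.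
by congr (_ * _); apply: eq_bigr => i _; rewrite ?mnm_xy_x ?mnm_xy_y.
Qed.

End CoxMonomials.

Lemma is_multihomogMX (R : realType) k (a b : 'I_k -> nat) (p : CoxRing R k) M :
  (forall i, a i + mdeg_i M i = b i)%N ->
  is_multihomog a p -> is_multihomog b (p * 'X_[M]).
Proof.
move=> eq_b hp m'; rewrite (perm_mem (msuppMX p M)) => /mapP [m hm ->] i.
by rewrite mdeg_iD addnC (hp m hm) eq_b.
Qed.

Section SegreVeronese.
Variables (R : realType) (k : nat) (d : 'I_k -> nat).

Definition sv_monomial (j : TIdx d) : 'X_{1..k + k} :=
  mnm_xy (fun i => d i - j i)%N (fun i => j i).

Definition sv_weight (j : TIdx d) : R[i] := \prod_(i < k) ('C(d i, j i))%:R.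

Lemma sv_weight_neq0 j : sv_weight j != 0.
Proof.
by apply/prodf_neq0 => i _; rewrite pnatr_eq0 -lt0n bin_gt0 -ltnS ltn_ord.
Qed.

Lemma mdeg_sv_monomial j i : mdeg_i (sv_monomial j) i = d i.
Proof. by rewrite /mdeg_i mnm_xy_x mnm_xy_y subnK // -ltnS ltn_ord. Qed.

Lemma sv_monomial_inj : injective sv_monomial.
Proof.
move=> j1 j2 /(congr1 (fun m : 'X_{1..k + k} => m (yv _))) ej.
by apply/ffunP => i; apply: val_inj; have := ej i; rewrite !mnm_xy_y.
Qed.

Definition sv_index (m : 'X_{1..k + k}) : TIdx d := [ffun i => inord (m (yv i))].

Lemma sv_monomialK : cancel sv_monomial sv_index.
Proof.
by move=> j; apply/ffunP => i; rewrite ffunE mnm_xy_y inord_val.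
Qed.

Lemma sv_indexK m : (forall i, mdeg_i m i = d i) -> sv_monomial (sv_index m) = m.
Proof.
move=> hm; apply: mnm_xyP => i; have := hm i; rewrite /mdeg_i => mi;
  rewrite ?mnm_xy_x ?mnm_xy_y ffunE inordK; lia.
Qed.

Lemma sv_pullbackE (l : TIdx d -> R[i]) :
  sv_pullback l = \sum_j (l j * sv_weight j) *: 'X_[sv_monomial j].
Proof.
by apply: eq_bigr => j _; rewrite scaler_prod mpolyX_xy scalerA.
Qed.

Lemma mcoeff_sv_pullback (l : TIdx d -> R[i]) m :
  (sv_pullback l)@_m =
  if sv_monomial (sv_index m) == m then l (sv_index m) * sv_weight (sv_index m)
  else 0.
Proof.
rewrite sv_pullbackE raddf_sum /=.
under eq_bigr => j _ do rewrite mcoeffZ mcoeffX.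
case: eqP => [em | nem].
  rewrite (bigD1 (sv_index m)) //= em eqxx mulr1 big1 ?addr0 // => j nj.
  by rewrite -em (inj_eq sv_monomial_inj) (negbTE nj) mulr0.
rewrite big1 // => j _; case: eqP => [ejm | _]; last by rewrite mulr0.
by exfalso; apply: nem; rewrite -ejm sv_monomialK.
Qed.

Lemma sv_pullback_coef (P : CoxRing R k) :
  is_multihomog d P ->
  sv_pullback (fun j => P@_(sv_monomial j) / sv_weight j) = P.
Proof.
move=> hP; apply/mpolyP => m; rewrite mcoeff_sv_pullback.
case: eqP => [-> | nem]; first by rewrite divfK ?sv_weight_neq0.
case: (boolP (m \in msupp P)) => [hm | /memN_msupp_eq0 -> //].
by case: nem; apply: sv_indexK; apply: hP.
Qed.

Lemma in_span_coef (I : CoxRing R k -> Prop) T (P : CoxRing R k) :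
  in_span I T -> is_multihomog d P -> I P ->
  \sum_j P@_(sv_monomial j) / sv_weight j * T j = 0.
Proof. by move=> spanT hP IP; apply: spanT; rewrite sv_pullback_coef. Qed.

Hypothesis d_gt0 : forall i, (0 < d i)%N.

Definition W_index : TIdx d := [ffun i => inord 1].

Lemma W_index_val i : W_index i = 1%N :> nat.
Proof. by rewrite ffunE inordK // ltnS d_gt0. Qed.

Lemma W_tensorE j : @W_tensor R k d j = (j == W_index)%:R.
Proof.
rewrite /W_tensor; have -> : [forall i, (j i : nat) == 1%N] = (j == W_index).
  apply/forallP/eqP => [j1 | -> i]; last by rewrite W_index_val.
  by apply/ffunP => i; apply: val_inj; rewrite /= W_index_val; apply/eqP.
by case: (j == W_index).
Qed.

Lemma in_span_W_coef (I : CoxRing R k -> Prop) (P : CoxRing R k) :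
  in_span I (@W_tensor R k d) -> is_multihomog d P -> I P ->
  P@_(sv_monomial W_index) = 0.
Proof.
move=> spanW hP /(in_span_coef spanW hP).
under eq_bigr => j _ do rewrite W_tensorE.
rewrite (bigD1 W_index) //= eqxx mulr1 big1 => [|j /negbTE ->]; last first.
  by rewrite mulr0.
rewrite addr0 => /eqP; rewrite mulf_eq0 invr_eq0 (negbTE (sv_weight_neq0 _)).
by rewrite orbF => /eqP.
Qed.

Lemma msupp_in_span_W (I : CoxRing R k -> Prop) (a : 'I_k -> nat) (p : CoxRing R k) m :
  (forall p q, I p -> I (q * p)) -> in_span I (@W_tensor R k d) ->
  (forall i, a i <= d i - 1)%N -> is_multihomog a p -> I p ->
  m \in msupp p -> exists i, (2 <= m (yv i))%N.
Proof.
move=> I_mul spanW le_ad hp Ip hm.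
have [/existsP [i y2] | /existsPn ley] := boolP [exists i, 2 <= m (yv i)]%N.
  by exists i.
exfalso.
have le_mW : (m <= sv_monomial W_index)%MM.
  apply: mnm_xy_le => i; have := hp m hm i; have := le_ad i;
    have := ley i; rewrite W_index_val /mdeg_i; lia.
set M := (sv_monomial W_index - m)%MM.
have hpM : is_multihomog d (p * 'X_[M]).
  apply: (is_multihomogMX _ hp) => i.
  by rewrite -(hp m hm) addnC -mdeg_iD submK // mdeg_sv_monomial.
have IpM : I (p * 'X_[M]) by rewrite mulrC; apply: I_mul.
have := in_span_W_coef spanW hpM IpM.
by rewrite -(submK le_mW) mcoeffMX => p_m0; rewrite mcoeff_msupp p_m0 eqxx in hm.
Qed.

End SegreVeronese.

Lemma ideal_Zk0 (R : realType) k : ideal_Zk (0 : CoxRing R k).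
Proof. by exists (fun _ => 0); rewrite big1 // => i _; rewrite mul0r. Qed.

Lemma ideal_ZkD (R : realType) k (p q : CoxRing R k) :
  ideal_Zk p -> ideal_Zk q -> ideal_Zk (p + q).
Proof.
move=> [G ->] [H ->]; exists (fun i => G i + H i).
by rewrite -big_split; apply: eq_bigr => i _; rewrite mulrDl.
Qed.

Lemma ideal_Zk_monomial (R : realType) k (c : R[i]) (m : 'X_{1..k + k}) i :
  (2 <= m (yv i))%N -> ideal_Zk (c *: 'X_[m] : CoxRing R k).
Proof.
move=> m_y2; exists (fun j => if j == i then c *: 'X_[m - U_(yv i) *+ 2] else 0).
rewrite (bigD1 i) //= eqxx big1 ?addr0 => [|j /negbTE ->]; last by rewrite mul0r.
rewrite -scalerAl mpolyXn -mpolyXD submK //.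
by apply/mnm_lepP => v; rewrite mulmnE mnm1E; case: eqP => [<-|].
Qed.

Lemma ideal_Zk_msupp (R : realType) k (p : CoxRing R k) :
  (forall m, m \in msupp p -> exists i, (2 <= m (yv i))%N) -> ideal_Zk p.
Proof.
move=> y2; rewrite (mpolyE p) big_seq.
apply: (big_ind (@ideal_Zk R k)); [exact: ideal_Zk0 | exact: ideal_ZkD |].
by move=> m /y2 [j]; apply: ideal_Zk_monomial.
Qed.

Unset Implicit Arguments.

Theorem lemma4p1 (R : realType) (k : nat) (d : 'I_k -> nat)
    (I : {mpoly (R[i])[k + k]} -> Prop) :
  (1 <= k)%N ->
  (forall i, 3 <= d i)%N ->
  zerodim_subscheme I ->
  in_span I (@W_tensor R k d) ->
  forall a : 'I_k -> nat, (forall i, a i <= d i - 1)%N ->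
  forall p : {mpoly (R[i])[k + k]}, is_multihomog a p -> I p -> ideal_Zk p.
Proof.
move=> _ d_ge3 [[[_ _ I_mul] _] _ _] spanW a le_ad p hp Ip.
have d_gt0 i : (0 < d i)%N by apply: leq_trans (d_ge3 i).
apply: ideal_Zk_msupp => m.
exact: (msupp_in_span_W d_gt0 I_mul spanW le_ad hp Ip).
Qed.
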